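(* Let $\Gamma=(U\cup V,E)$ be a $3$-regular bipartite graph with $m=|U|=|V|$, and let $\hat\Gamma$ be as described in the context. For any $2$-factor $F$ of $\Gamma$ and any function $f:F\to\{0,1\}$, the set $\mu(F,f)$ contains exactly $2^{2m}$ perfect matchings.
   Context: Construction of $\hat\Gamma$: for each vertex $v$ of $\Gamma$ with neighbours $x,y,z$, there are four inner vertices $a_{v,S}$, one for each subset $S\subseteq\{x,y,z\}$ of even size, and six outer vertices $b_{v,u,0},b_{v,u,1}$ for $u\in\{x,y,z\}$. Within the gadget, $a_{v,S}$ is adjacent to $b_{v,u,1}$ if $u\in S$ and to $b_{v,u,0}$ if $u\notin S$. For each edge $e=\{u,v\}\in E$ and $i\in\{0,1\}$ there is an edge $e_i$ of $\hat\Gamma$ joining $b_{v,u,i}$ and $b_{u,v,i}$. There are no other edges. A perfect matching $\mu$ of $\hat\Gamma$ is uniform if for every $e\in E$ at most one of $e_0,e_1$ is in $\mu$; for such $\mu$, $F_\mu\subseteq E$ is the set of $e\in E$ such that exactly one of $e_0,e_1$ is in $\mu$, and $f_\mu:F_\mu\to\{0,1\}$ is given by $f_\mu(e)=i$ iff $e_i\in\mu$. A $2$-factor of $\Gamma$ is a set $F\subseteq E$ such that every vertex of $\Gamma$ is incident to exactly two edges of $F$. For a $2$-factor $F$ and $f:F\to\{0,1\}$, $\mu(F,f)$ denotes the set of (uniform) perfect matchings $\mu$ of $\hat\Gamma$ with $F_\mu=F$ and $f_\mu=f$. *)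

From mathcomp Require Import all_boot.
Set Implicit Arguments. Unset Strict Implicit. Unset Printing Implicit Defensive.

Section Hat.
Variables (T : finType) (e : rel T).

Definition Gedge (A : {set T}) : bool :=
  [exists u, exists v, e u v && (A == [set u; v])].

Definition two_factor (F : {set {set T}}) : Prop :=
  (forall A, A \in F -> Gedge A) /\
  (forall v : T, #|[set A in F | v \in A]| = 2).

(* Vertex type of hat Gamma (containing the actual vertices as valid elements):
   inl (v, Sx)    stands for the inner vertex a_{v,S},
   inr (v, u, i) stands for the outer vertex b_{v,u,i}  (i : bool, false = 0, true = 1). *)
Definition hatV : finType := ((T * {set T}) + (T * T * bool))%type.

Definition hat_valid (w : hatV) : bool :=
  match w with
  | inl (v, Sx) => (Sx \subset [set u | e v u]) && ~~ odd #|Sx|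
  | inr (v, u, _) => e v u
  end.

Definition hat_adj1 (w1 w2 : hatV) : bool :=
  match w1, w2 with
  | inl (v, Sx), inr (v', u, i) => (v' == v) && (i == (u \in Sx))
  | inr (v, u, i), inr (u', v', i') => [&& u' == u, v' == v & i' == i]
  | _, _ => false
  end.

Definition hat_adj (w1 w2 : hatV) : bool :=
  [&& hat_valid w1, hat_valid w2 & hat_adj1 w1 w2 || hat_adj1 w2 w1].

Definition hat_edge (B : {set hatV}) : bool :=
  [exists x, exists y, hat_adj x y && (B == [set x; y])].

Definition perfect_matching (M : {set {set hatV}}) : bool :=
  [forall B in M, hat_edge B] &&
  [forall x, hat_valid x ==> (#|[set B in M | x \in B]| == 1)].

(* For an edge A = {u,v} of Gamma and i : bool, the edge e_i = {b_{v,u,i}, b_{u,v,i}}. *)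
Definition e_hat (i : bool) (A : {set T}) : {set hatV} :=
  [set w : hatV | match w with
                  | inr (v, u, j) => [&& j == i, e v u & [set v; u] == A]
                  | inl _ => false
                  end].

Definition uniform (M : {set {set hatV}}) : bool :=
  [forall A, Gedge A ==> ~~ ((e_hat false A \in M) && (e_hat true A \in M))].

Definition F_mu (M : {set {set hatV}}) : {set {set T}} :=
  [set A | Gedge A && ((e_hat false A \in M) (+) (e_hat true A \in M))].

(* f_mu(A) = 1 iff e_1 in mu (meaningful for A in F_mu). *)
Definition f_mu (M : {set {set hatV}}) (A : {set T}) : bool := e_hat true A \in M.

(* mu(F, f) ; f : F -> {0,1} is given as a bool-valued function whose
   values outside F are irrelevant. *)
Definition mu_set (F : {set {set T}}) (f : {set T} -> bool) : {set {set {set hatV}}} :=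
  [set M | [&& perfect_matching M, uniform M, F_mu M == F &
              [forall A in F, f_mu M A == f A]]].

End Hat.

From mathcomp Require Import all_boot.
Set Implicit Arguments. Unset Strict Implicit. Unset Printing Implicit Defensive.

(* Let mu be a uniform perfect matching with F_mu = F and f_mu = f, and let v be a vertex
   with F-neighbours x, y and third neighbour z. The edges e_{f(vx)} and e_{f(vy)} cover
   b_{v,x,f(vx)} and b_{v,y,f(vy)}, and no edge e_i covers b_{v,z,i}; so the four inner
   vertices a_{v,S} are matched with the four outer vertices b_{v,x,1-f(vx)}, b_{v,y,1-f(vy)},
   b_{v,z,0}, b_{v,z,1}, where a_{v,S} only sees the b_{v,u,[u in S]}. This local bipartite
   graph has exactly two perfect matchings, told apart by which F-neighbour of v is matched
   with an a_{v,S} such that z is not in S. Conversely, any such choice made independently at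
   every vertex, together with the edges e_{f(A)} for A in F, is a matching in mu(F, f).
   Hence mu(F, f) is in bijection with the functions picking one of the two F-neighbours at
   each of the 2m vertices. *)

Lemma eq_set2 (X : finType) (p q p' q' : X) :
  ([set p; q] == [set p'; q']) = (p == p') && (q == q') || (p == q') && (q == p').
Proof.
apply/idP/idP => [/eqP E|]; last by case/orP=> /andP[/eqP -> /eqP ->] //; rewrite setUC.
have hp := set21 p q; have hq := set22 p q; rewrite E in hp hq.
have hp' := set21 p' q'; have hq' := set22 p' q'; rewrite -E in hp' hq'.
move: hp hq hp' hq'; rewrite !inE {E}.
case/orP=> /eqP E1; subst.
  case/orP=> /eqP E2; subst; rewrite ?eqxx //=.
  by move=> _ /orP[] /eqP ->; rewrite eqxx.
case/orP=> /eqP E2; subst; rewrite ?eqxx ?orbT //=.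
by move=> /orP[] /eqP -> _; rewrite eqxx.
Qed.

Lemma card_sub_set3 (X : finType) (x y z : X) (S : {set X}) :
  y != x -> z != x -> z != y -> S \subset [set x; y; z] ->
  #|S| = (x \in S) + (y \in S) + (z \in S).
Proof.
move=> yx zx zy sub.
rewrite (cardsD1 x) (cardsD1 y) (cardsD1 z) !inE yx zx zy /=.
suff -> : S :\ x :\ y :\ z = set0 by rewrite cards0 addn0 addnA.
apply/setP=> w; rewrite !inE; apply/negP => /and4P[wz wy wx /(subsetP sub)].
by rewrite !inE (negbTE wx) (negbTE wy) (negbTE wz).
Qed.

Lemma eq_sub_set3 (X : finType) (x y z : X) (S S' : {set X}) :
  S \subset [set x; y; z] -> S' \subset [set x; y; z] ->
  (x \in S) = (x \in S') -> (y \in S) = (y \in S') -> (z \in S) = (z \in S') -> S = S'.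
Proof.
move=> sS sS' hx hy hz; apply/setP => w.
have [|wn] := boolP (w \in [set x; y; z]); first by rewrite !inE => /orP[/orP[]|] /eqP ->.
by apply/idP/idP => [/(subsetP sS)|/(subsetP sS')]; rewrite (negbTE wn).
Qed.

Lemma unique_in_set3 (X : finType) (x y z : X) (P : pred X) (a b : bool) :
  y != x -> z != x -> z != y -> ~~ (a && b) ->
  P x = a -> P y = b -> P z = ~~ a && ~~ b ->
  exists u0, [/\ u0 \in [set x; y; z], P u0 &
                 forall u, u \in [set x; y; z] -> P u -> u = u0].
Proof.
move=> yx zx zy; case: a; case: b => //= _ Px Py Pz;
  [exists x | exists y | exists z]; rewrite !inE eqxx ?orbT ?Px ?Py ?Pz;
  by split=> // u; rewrite !inE => /orP[/orP[]|] /eqP ->; rewrite ?Px ?Py ?Pz.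
Qed.

Section HatGraph.
Variables (T : finType) (e : rel T).
Hypothesis e_sym : symmetric e.

Definition inner v S : hatV T := inl (v, S).
Definition outer v u i : hatV T := inr (v, u, i).
Definition nbhd v := [set u | e v u].
Definition even_subnbhd v (S : {set T}) := (S \subset nbhd v) && ~~ odd #|S|.
Definition inner_edge v (S : {set T}) u := [set inner v S; outer v u (u \in S)].
Definition cross_edge v u i := [set outer v u i; outer u v i].

Lemma eq_inner v S v' S' : (inner v S == inner v' S') = (v == v') && (S == S').
Proof. by []. Qed.

Lemma inner_outerF v S v' u i : (inner v S == outer v' u i) = false.
Proof. by []. Qed.

Lemma outer_innerF v S v' u i : (outer v' u i == inner v S) = false.
Proof. by []. Qed.

Lemma eq_outer v u i v' u' i' :
  (outer v u i == outer v' u' i') = [&& v == v', u == u' & i == i'].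
Proof. by apply/eqP/and3P => [[-> -> ->]|[/eqP-> /eqP-> /eqP->]]. Qed.

Variant hat_edge_spec (B : {set hatV T}) : Prop :=
  | InnerEdge v S u of even_subnbhd v S & e v u & B = inner_edge v S u
  | CrossEdge v u i of e v u & B = cross_edge v u i.

Lemma hat_edgeP B : hat_edge e B -> hat_edge_spec B.
Proof.
case/existsP => p /existsP [q /andP[+ /eqP ->]]; rewrite /hat_adj.
case: p => [[v S]|[[v u] i]]; case: q => [[v' S']|[[v' u'] i']] //=; rewrite ?andbF //.
- rewrite orbF => /and3P[HS Hu /andP[/eqP ? /eqP ?]]; subst.
  exact: InnerEdge HS Hu _.
- case/and4P=> Hu HS /eqP ? /eqP ?; subst.
  by apply: InnerEdge HS Hu _; rewrite /inner_edge setUC.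
- case/and3P=> Hu _ /orP[] /and3P[/eqP ? /eqP ? /eqP ?]; subst.
  all: exact: CrossEdge Hu _.
Qed.

Lemma hat_edge_inner v S u : even_subnbhd v S -> e v u -> hat_edge e (inner_edge v S u).
Proof.
move=> HS Hu; apply/existsP; exists (inner v S); apply/existsP; exists (outer v u (u \in S)).
by rewrite eqxx andbT; apply/and3P; split; [exact: HS | exact: Hu | rewrite /= !eqxx].
Qed.

Lemma hat_edge_cross v u i : e v u -> hat_edge e (cross_edge v u i).
Proof.
move=> Hu; apply/existsP; exists (outer v u i); apply/existsP; exists (outer u v i).
by rewrite eqxx andbT; apply/and3P; split; [exact: Hu | rewrite /= e_sym | rewrite /= !eqxx].
Qed.

Lemma hat_edge_at_inner B v S :
  hat_edge e B -> inner v S \in B -> exists2 u, e v u & B = inner_edge v S u.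
Proof.
case/hat_edgeP => [v' S' u' _ Hu ->|v' u' i _ ->]; rewrite !inE ?inner_outerF //.
by rewrite eq_inner orbF => /andP[/eqP -> /eqP ->]; exists u'.
Qed.

Lemma hat_edge_at_outer B v u i : hat_edge e B -> outer v u i \in B ->
  B = cross_edge v u i \/
  exists S, [/\ even_subnbhd v S, (u \in S) = i & B = inner_edge v S u].
Proof.
case/hat_edgeP => [v' S' u' HS _ ->|v' u' i' _ ->]; rewrite !inE.
  by rewrite outer_innerF eq_outer => /and3P[/eqP -> /eqP -> /eqP ->]; right; exists S'.
rewrite !eq_outer => /orP[] /and3P[/eqP <- /eqP <- /eqP <-]; left => //.
by rewrite /cross_edge setUC.
Qed.

Lemma e_hat_cross v u i : e v u -> e_hat e i [set v; u] = cross_edge v u i.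
Proof.
move=> Hu; apply/setP => -[[v' S']|[[v' u'] j]]; rewrite !inE //.
rewrite -!/(outer _ _ _) !eq_outer eq_set2.
case: (j == i); rewrite ?andbF ?andbT //=.
apply/andP/idP => [[]|H] //; split => //.
by case/orP: H => /andP[/eqP-> /eqP->] //; rewrite e_sym.
Qed.

Lemma inner_e_hat v S i A : (inner v S \in e_hat e i A) = false.
Proof. by rewrite inE. Qed.

Lemma Gedge_set2 v u : e v u -> Gedge e [set v; u].
Proof. by move=> Hu; apply/existsP; exists v; apply/existsP; exists u; rewrite Hu eqxx. Qed.

Section PerfectMatching.
Variable M : {set {set hatV T}}.
Hypothesis pmM : perfect_matching e M.

Lemma perfect_matching_edge B : B \in M -> hat_edge e B.
Proof. by case/andP: pmM => /forallP H _ BM; move: (H B); rewrite BM. Qed.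

Lemma perfect_matching_card w : hat_valid e w -> #|[set B in M | w \in B]| = 1.
Proof. by case/andP: pmM => _ /forallP H Hw; move: (H w); rewrite Hw => /eqP. Qed.

Lemma perfect_matching_cover w : hat_valid e w -> exists2 B, B \in M & w \in B.
Proof.
move=> /perfect_matching_card /eqP /cards1P [B HB].
have : B \in [set B0 in M | w \in B0] by rewrite HB set11.
by rewrite inE => /andP[]; exists B.
Qed.

Lemma perfect_matching_uniq w B1 B2 : hat_valid e w ->
  B1 \in M -> B2 \in M -> w \in B1 -> w \in B2 -> B1 = B2.
Proof.
move=> /perfect_matching_card /eqP /cards1P [B HB] B1M B2M wB1 wB2.
have : B1 \in [set B0 in M | w \in B0] by rewrite inE B1M.
have : B2 \in [set B0 in M | w \in B0] by rewrite inE B2M.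
by rewrite HB !inE => /eqP -> /eqP ->.
Qed.

End PerfectMatching.

Lemma perfect_matching_intro (M : {set {set hatV T}}) :
  (forall B, B \in M -> hat_edge e B) ->
  (forall w, hat_valid e w -> exists B0, [/\ B0 \in M, w \in B0 &
     forall B, B \in M -> w \in B -> B = B0]) ->
  perfect_matching e M.
Proof.
move=> edgeM coverM; apply/andP; split; first by apply/forallP => B; apply/implyP/edgeM.
apply/forallP => w; apply/implyP => /coverM [B0 [B0M wB0 uniqB0]].
apply/cards1P; exists B0; apply/setP => B; rewrite !inE.
by apply/andP/eqP => [[]|->]; [exact: uniqB0|].
Qed.

Lemma hat_edge_valid B : hat_edge e B -> exists2 w, hat_valid e w & w \in B.
Proof.
by case/hat_edgeP => [v S u HS _ ->|v u i Hu ->]; [exists (inner v S) | exists (outer v u i)];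
  rewrite ?set21.
Qed.

Lemma perfect_matching_sub_eq (M M' : {set {set hatV T}}) :
  perfect_matching e M -> perfect_matching e M' -> M \subset M' -> M = M'.
Proof.
move=> pmM pmM' sMM'; apply/eqP; rewrite eqEsubset sMM' /=.
apply/subsetP => B BM'.
have [w Hw wB] := hat_edge_valid (perfect_matching_edge pmM' BM').
have [B1 B1M wB1] := perfect_matching_cover pmM Hw.
by rewrite (perfect_matching_uniq pmM' Hw BM' (subsetP sMM' _ B1M) wB wB1).
Qed.

Section TwoFactor.
Hypothesis cubic : forall v : T, #|[set u | e v u]| = 3.
Variable F : {set {set T}}.
Hypothesis HF : two_factor e F.
Variable f : {set T} -> bool.

Definition Fnbhd v := [set u | e v u && ([set v; u] \in F)].

Lemma two_factor_edge A : A \in F -> exists v u, e v u /\ A = [set v; u].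
Proof.
by case: HF => edgeF _ /edgeF /existsP [v /existsP [u /andP[Hu /eqP ->]]]; exists v, u.
Qed.

Lemma Fnbhd_sub v : Fnbhd v \subset nbhd v.
Proof. by apply/subsetP => u; rewrite !inE => /andP[]. Qed.

Lemma mem_Fnbhd v u : ([set v; u] \in F) = (u \in Fnbhd v).
Proof.
rewrite inE; have [/two_factor_edge [p [q [Hpq /eqP]]]|] := boolP ([set v; u] \in F);
  rewrite ?andbF ?andbT //.
by rewrite eq_set2 => /orP[] /andP[/eqP-> /eqP->] //; rewrite e_sym.
Qed.

Lemma card_Fnbhd v : #|Fnbhd v| = 2.
Proof.
case: HF => _ /(_ v) <-.
have -> : [set A in F | v \in A] = [set [set v; u] | u in Fnbhd v].
  apply/setP => A; rewrite inE; apply/andP/imsetP => [[AF]|[u uF ->]]; last first.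
    by rewrite mem_Fnbhd uF set21.
  have [p [q [_ EA]]] := two_factor_edge AF; rewrite EA in AF *.
  case/set2P=> Ev; rewrite -Ev in AF *; first by exists q; rewrite -?mem_Fnbhd.
  by exists p; rewrite -?mem_Fnbhd setUC.
apply/esym/card_in_imset => u u' _ _ /eqP.
by rewrite eq_set2 eqxx /= => /orP[/eqP|/andP[/eqP <- /eqP]].
Qed.

Lemma nbhd_split v x : x \in Fnbhd v -> exists y z,
  [/\ y != x, z != x, z != y, nbhd v = [set x; y; z] & Fnbhd v = [set x; y]].
Proof.
move=> xF.
have /cards1P [y Ey] : #|Fnbhd v :\ x| == 1.
  by have := card_Fnbhd v; rewrite (cardsD1 x) xF add1n => -[->].
have /setD1P [yx yF] : y \in Fnbhd v :\ x by rewrite Ey set11.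
have EF : Fnbhd v = [set x; y] by rewrite -(setD1K xF) Ey.
have /cards1P [z Ez] : #|nbhd v :\: Fnbhd v| == 1.
  by rewrite cardsDS ?Fnbhd_sub // card_Fnbhd /nbhd cubic.
have : z \in nbhd v :\: Fnbhd v by rewrite Ez set11.
rewrite inE EF !inE negb_or => /andP[/andP[zx zy] _].
exists y, z; split => //.
rewrite -(setID (nbhd v) (Fnbhd v)) Ez (setIidPr (Fnbhd_sub v)) EF.
by apply/setP => w; rewrite !inE; case: (w == x); case: (w == y).
Qed.

Lemma mu_set_pm M : M \in mu_set e F f -> perfect_matching e M.
Proof. by rewrite inE => /and4P[]. Qed.

Lemma mu_set_cross M v u i : M \in mu_set e F f -> e v u ->
  (cross_edge v u i \in M) = (u \in Fnbhd v) && (i == f [set v; u]).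
Proof.
rewrite inE => /and4P[_ /forallP unifM /eqP FM /forallP fM] Hu.
have G := Gedge_set2 Hu.
have := unifM [set v; u]; have : [set v; u] \in F_mu e M = ([set v; u] \in F) by rewrite FM.
rewrite -e_hat_cross // -mem_Fnbhd inE G /=.
have [AF|_] := boolP ([set v; u] \in F); last first.
  by case: i; case: (e_hat e true _ \in M); case: (e_hat e false _ \in M).
move: (fM [set v; u]); rewrite AF /f_mu => /eqP <-.
by case: i; case: (e_hat e true _ \in M); case: (e_hat e false _ \in M).
Qed.

(* For [u] in [Fnbhd v], [outer v u (f [set v; u])] is covered by a cross edge, and its twin
   [outer v u (free_bit v u)] is left to be matched inside the gadget of [v]. *)
Definition free_bit v u := ~~ f [set v; u].

Section MuSet.
Variable M : {set {set hatV T}}.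
Hypothesis HM : M \in mu_set e F f.
Let pmM := mu_set_pm HM.

Lemma mu_set_free_outer v u i : e v u -> ~~ ((u \in Fnbhd v) && (i == f [set v; u])) ->
  exists S, [/\ even_subnbhd v S, (u \in S) = i & inner_edge v S u \in M].
Proof.
move=> Hu Hi; have [B BM uB] := perfect_matching_cover pmM (w := outer v u i) Hu.
case: (hat_edge_at_outer (perfect_matching_edge pmM BM) uB) => [EB|[S [HS uS EB]]].
  by move: BM; rewrite EB (mu_set_cross _ HM Hu) (negbTE Hi).
by exists S; rewrite -EB.
Qed.

Lemma mu_set_inner_uniq v S u u' : even_subnbhd v S ->
  inner_edge v S u \in M -> inner_edge v S u' \in M -> u = u'.
Proof.
move=> HS EM EM'.
have := perfect_matching_uniq pmM (w := inner v S) HS EM EM' (set21 _ _) (set21 _ _).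
by move/eqP; rewrite eq_set2 inner_outerF /= orbF eqxx eq_outer eqxx /= => /andP[/eqP].
Qed.

Lemma mu_set_outer_uniq v (S S' : {set T}) u : e v u -> (u \in S) = (u \in S') ->
  inner_edge v S u \in M -> inner_edge v S' u \in M -> S = S'.
Proof.
move=> Hu uSS' EM; rewrite /inner_edge -uSS' => EM'.
have := perfect_matching_uniq pmM (w := outer v u (u \in S)) Hu EM EM' (set22 _ _) (set22 _ _).
by move/eqP; rewrite eq_set2 eq_inner outer_innerF /= orbF eqxx => /andP[/eqP].
Qed.

Lemma mu_set_Fnbhd_bit v S u : u \in Fnbhd v ->
  inner_edge v S u \in M -> (u \in S) = free_bit v u.
Proof.
move=> uF EM; have Hu : e v u by move: uF; rewrite inE => /andP[].
rewrite /free_bit; have [fS|] := eqVneq (u \in S) (f [set v; u]); last first.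
  by case: (u \in S); case: (f _).
have EM' : cross_edge v u (u \in S) \in M by rewrite (mu_set_cross _ HM Hu) uF fS eqxx.
have := perfect_matching_uniq pmM (w := outer v u (u \in S)) Hu EM EM' (set22 _ _) (set21 _ _).
move=> E; have := set21 (inner v S) (outer v u (u \in S)).
by rewrite -/(inner_edge _ _ _) E !inE !inner_outerF.
Qed.

End MuSet.

(* The local matching at [v] selected by the F-neighbour [x0]: [inner v S] is matched towards
   [x0] when [S] avoids the third neighbour and towards the other F-neighbour when it does
   not, provided the bit of [S] at that neighbour is free; otherwise towards the third
   neighbour. *)
Definition Fmatch v x0 (S : {set T}) u :=
  ((u == x0) == (S \subset Fnbhd v)) && ((u \in S) == free_bit v u).

Definition gadget_match v x0 S u :=
  if u \in Fnbhd v then Fmatch v x0 S u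
  else [forall u', (u' \in Fnbhd v) ==> ~~ Fmatch v x0 S u'].

Section Gadget.
Variables v x y z : T.
Hypotheses (yx : y != x) (zx : z != x) (zy : z != y).
Hypothesis Nv : nbhd v = [set x; y; z].
Hypothesis NFv : Fnbhd v = [set x; y].

Lemma adj_set3 w : e v w = (w \in [set x; y; z]).
Proof. by rewrite -Nv inE. Qed.

Lemma even_sub_set3 S : even_subnbhd v S -> S \subset [set x; y; z].
Proof. by rewrite -Nv => /andP[]. Qed.

Lemma even_parity S : even_subnbhd v S -> (z \in S) = (x \in S) (+) (y \in S).
Proof.
move=> HS; case/andP: (HS) => _; rewrite (card_sub_set3 yx zx zy (even_sub_set3 HS)).
by rewrite !oddD !oddb; case: (x \in S); case: (y \in S); case: (z \in S).
Qed.

Lemma even_sub_Fnbhd S : even_subnbhd v S -> (S \subset Fnbhd v) = (z \notin S).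
Proof.
move=> HS; rewrite NFv; apply/idP/idP => [/subsetP sub|zS].
  by apply/negP => /sub; rewrite !inE (negbTE zx) (negbTE zy).
apply/subsetP => w wS; move: (subsetP (even_sub_set3 HS) w wS); rewrite !inE.
by case/orP => // /eqP Ew; rewrite -Ew wS in zS.
Qed.

Lemma gadget_matchE S u : even_subnbhd v S -> gadget_match v x S u =
  let A := (z \notin S) && ((x \in S) == free_bit v x) in
  let B := (z \in S) && ((y \in S) == free_bit v y) in
  if u == x then A else if u == y then B else ~~ A && ~~ B.
Proof.
move=> HS /=; rewrite /gadget_match /Fmatch even_sub_Fnbhd // NFv !inE.
have [->|ux] /= := eqVneq u x; first by case: (z \in S).
have [->|uy] /= := eqVneq u y; first by case: (z \in S).
apply/forallP/andP => [H|[Hx Hy] u'].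
  split; first by move: (H x); rewrite !inE eqxx.
  by move: (H y); rewrite !inE eqxx orbT (negbTE yx); case: (z \in S).
rewrite !inE; have [->|_] /= := eqVneq u' x; first by move: Hx; case: (z \in S).
by have [->|_] //= := eqVneq u' y; move: Hy; case: (z \in S).
Qed.

Definition gadget_set (ix iy : bool) : {set T} :=
  [set w | [|| (w == x) && ix, (w == y) && iy | (w == z) && (ix (+) iy)]].

Lemma gadget_set_x ix iy : (x \in gadget_set ix iy) = ix.
Proof. by rewrite inE eqxx eq_sym (negbTE yx) eq_sym (negbTE zx) /= orbF. Qed.

Lemma gadget_set_y ix iy : (y \in gadget_set ix iy) = iy.
Proof. by rewrite inE eqxx (negbTE yx) eq_sym (negbTE zy) /= orbF. Qed.

Lemma gadget_set_even ix iy : even_subnbhd v (gadget_set ix iy).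
Proof.
have sub : gadget_set ix iy \subset [set x; y; z].
  by apply/subsetP => w; rewrite !inE => /or3P[] /andP[-> _]; rewrite ?orbT.
rewrite /even_subnbhd Nv sub (card_sub_set3 yx zx zy sub) gadget_set_x gadget_set_y.
by rewrite inE eqxx (negbTE zx) (negbTE zy) !oddD !oddb; clear sub; case: ix; case: iy.
Qed.

Lemma even_subnbhd_eq S S' : even_subnbhd v S -> even_subnbhd v S' ->
  (x \in S) = (x \in S') -> (y \in S) = (y \in S') -> S = S'.
Proof.
move=> HS HS' hx hy; apply: (eq_sub_set3 (even_sub_set3 HS) (even_sub_set3 HS')) => //.
by rewrite !even_parity // hx hy.
Qed.

Lemma even_subnbhd_eq_xz S S' : even_subnbhd v S -> even_subnbhd v S' ->
  (x \in S) = (x \in S') -> (z \in S) = (z \in S') -> S = S'.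
Proof.
move=> HS HS' hx; rewrite !even_parity // hx => hz; apply: even_subnbhd_eq => //.
by move: hz; case: (x \in S'); case: (y \in S); case: (y \in S').
Qed.

Lemma even_subnbhd_eq_yz S S' : even_subnbhd v S -> even_subnbhd v S' ->
  (y \in S) = (y \in S') -> (z \in S) = (z \in S') -> S = S'.
Proof.
move=> HS HS' hy; rewrite !even_parity // hy => hz; apply: even_subnbhd_eq => //.
by move: hz; case: (y \in S'); case: (x \in S); case: (x \in S').
Qed.

Lemma even_subnbhd_unique (P : pred {set T}) ix iy :
  (forall S, even_subnbhd v S -> P S = ((x \in S) == ix) && ((y \in S) == iy)) ->
  exists S0, [/\ even_subnbhd v S0, P S0 &
                 forall S, even_subnbhd v S -> P S -> S = S0].
Proof.
move=> HP; exists (gadget_set ix iy); split; first exact: gadget_set_even.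
  by rewrite HP ?gadget_set_even // gadget_set_x gadget_set_y !eqxx.
move=> S HS; rewrite HP // => /andP[/eqP hx /eqP hy].
by apply: even_subnbhd_eq; rewrite ?gadget_set_even ?gadget_set_x ?gadget_set_y.
Qed.

Lemma gadget_match_inner S : even_subnbhd v S -> exists u0,
  [/\ e v u0, gadget_match v x S u0 &
      forall u, e v u -> gadget_match v x S u -> u = u0].
Proof.
move=> HS.
have [||||u0 [u0N Ru0 uniq_u0]] := unique_in_set3 (P := gadget_match v x S)
  (a := (z \notin S) && ((x \in S) == free_bit v x))
  (b := (z \in S) && ((y \in S) == free_bit v y)) yx zx zy.
- by case: (z \in S); rewrite ?andbF.
- by rewrite gadget_matchE //= eqxx.
- by rewrite gadget_matchE //= (negbTE yx) eqxx.
- by rewrite gadget_matchE //= (negbTE zx) (negbTE zy).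
exists u0; split => [|//|u Hu]; first by rewrite adj_set3.
by apply: uniq_u0; rewrite -adj_set3.
Qed.

Lemma gadget_match_outer u i : e v u -> ~~ ((u \in Fnbhd v) && (i == f [set v; u])) ->
  exists S0, [/\ even_subnbhd v S0, (u \in S0) = i, gadget_match v x S0 u &
    forall S, even_subnbhd v S -> (u \in S) = i -> gadget_match v x S u -> S = S0].
Proof.
move=> Hu Hi.
suff [ix [iy HP]] : exists ix iy, forall S, even_subnbhd v S ->
    ((u \in S) == i) && gadget_match v x S u = ((x \in S) == ix) && ((y \in S) == iy).
  have [S0 [HS0 /andP[/eqP uS0 RS0] uniqS0]] := even_subnbhd_unique HP.
  by exists S0; split=> // S HS uS RS; apply: uniqS0; rewrite ?uS ?eqxx.
have : u \in [set x; y; z] by rewrite -adj_set3.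
move: Hi; rewrite NFv !inE => Hi /orP[/orP[]|] /eqP Eu; subst u.
- have -> : i = free_bit v x by move: Hi; rewrite eqxx /free_bit; case: i; case: (f _).
  exists (free_bit v x), (free_bit v x) => S HS.
  rewrite gadget_matchE //= eqxx (even_parity HS).
  by case: (x \in S); case: (y \in S); case: (free_bit v x).
- have -> : i = free_bit v y by move: Hi; rewrite eqxx orbT /free_bit; case: i; case: (f _).
  exists (~~ free_bit v y), (free_bit v y) => S HS.
  rewrite gadget_matchE //= (negbTE yx) eqxx (even_parity HS).
  by case: (x \in S); case: (y \in S); case: (free_bit v y).
- exists (if i then free_bit v y else ~~ free_bit v x).
  exists (if i then ~~ free_bit v y else ~~ free_bit v x) => S HS.
  rewrite gadget_matchE //= (negbTE zx) (negbTE zy) (even_parity HS) {Hi}.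
  by case: (x \in S); case: (y \in S); case: (free_bit v x); case: (free_bit v y); case: i.
Qed.

Variable M : {set {set hatV T}}.
Hypothesis HM : M \in mu_set e F f.

Lemma mu_set_free_sides Sx Sy : even_subnbhd v Sx -> even_subnbhd v Sy ->
  inner_edge v Sx x \in M -> inner_edge v Sy y \in M -> (z \in Sy) = ~~ (z \in Sx).
Proof.
move=> HSx HSy Ex Ey.
(* Otherwise [Sx], [Sy] and the set matched with the free outer vertex at [z] agree on [z];
   two of them then agree on [x] too, hence coincide. *)
have x_bit_neq S1 S2 u1 u2 : u1 != u2 -> even_subnbhd v S1 -> even_subnbhd v S2 ->
    inner_edge v S1 u1 \in M -> inner_edge v S2 u2 \in M -> (z \in S1) = (z \in S2) ->
    (x \in S1) != (x \in S2).
  move=> u12 HS1 HS2 E1 E2 z12; apply: contra_neq u12 => x12.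
  by apply: (mu_set_inner_uniq HM HS1 E1); rewrite (even_subnbhd_eq_xz HS1 HS2 x12 z12).
have [zE|] := eqVneq (z \in Sy) (z \in Sx); last by case: (z \in Sy); case: (z \in Sx).
have Hz : e v z by rewrite adj_set3 !inE eqxx orbT.
have zNF : ~~ ((z \in Fnbhd v) && ((z \in Sx) == f [set v; z])).
  by rewrite NFv !inE (negbTE zx) (negbTE zy).
have [S' [HS' zS' E']] := mu_set_free_outer HM Hz zNF.
have := x_bit_neq _ _ _ _ yx HSy HSx Ey Ex zE.
have := x_bit_neq _ _ _ _ zx HS' HSx E' Ex zS'.
have := x_bit_neq _ _ _ _ zy HS' HSy E' Ey (etrans zS' (esym zE)).
by case: (x \in Sx); case: (x \in Sy); case: (x \in S').
Qed.

Lemma mu_set_gadget_match Sx Sy : even_subnbhd v Sx -> even_subnbhd v Sy ->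
  inner_edge v Sx x \in M -> inner_edge v Sy y \in M -> z \notin Sx -> z \in Sy ->
  forall S u, even_subnbhd v S -> e v u -> inner_edge v S u \in M -> gadget_match v x S u.
Proof.
move=> HSx HSy Ex Ey zSx zSy S u HS Hu EM.
have xF : x \in Fnbhd v by rewrite NFv set21.
have yF : y \in Fnbhd v by rewrite NFv set22.
rewrite gadget_matchE //=; move: (Hu); rewrite adj_set3 !inE => /orP[/orP[]|] /eqP Eu; subst u.
- rewrite eqxx (mu_set_Fnbhd_bit HM xF EM) eqxx andbT.
  rewrite (mu_set_outer_uniq HM Hu _ EM Ex) //.
  by rewrite !(mu_set_Fnbhd_bit HM xF) //.
- rewrite (negbTE yx) eqxx (mu_set_Fnbhd_bit HM yF EM) eqxx andbT.
  rewrite (mu_set_outer_uniq HM Hu _ EM Ey) //.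
  by rewrite !(mu_set_Fnbhd_bit HM yF) //.
rewrite (negbTE zx) (negbTE zy) -(mu_set_Fnbhd_bit HM xF Ex) -(mu_set_Fnbhd_bit HM yF Ey).
apply/andP; split; apply/negP => /andP[zS /eqP bS].
  have ESx : S = Sx by apply: even_subnbhd_eq_xz; rewrite // (negbTE zS) (negbTE zSx).
  by subst S; move/eqP: (mu_set_inner_uniq HM HSx EM Ex); rewrite (negbTE zx).
have ESy : S = Sy by apply: even_subnbhd_eq_yz; rewrite // zS zSy.
by subst S; move/eqP: (mu_set_inner_uniq HM HSy EM Ey); rewrite (negbTE zy).
Qed.

End Gadget.

Definition choice_matching (g : T -> T) : {set {set hatV T}} :=
  [set B | [exists A in F, B == e_hat e (f A) A] ||
           [exists v, exists S, exists u, [&& even_subnbhd v S, e v u,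
              gadget_match v (g v) S u & B == inner_edge v S u]]].

Section ChoiceMatching.
Variable g : T -> T.

Lemma choice_matching_edge B : B \in choice_matching g -> hat_edge e B.
Proof.
rewrite inE => /orP[/existsP [A /andP[AF /eqP ->]]|].
  have [p [q [Hpq ->]]] := two_factor_edge AF.
  by rewrite e_hat_cross //; apply: hat_edge_cross.
case/existsP => v /existsP [S /existsP [u /and4P[HS Hu _ /eqP ->]]].
exact: hat_edge_inner.
Qed.

Lemma mem_choice_matching_inner v S u : even_subnbhd v S -> e v u ->
  (inner_edge v S u \in choice_matching g) = gadget_match v (g v) S u.
Proof.
move=> HS Hu; rewrite inE; apply/idP/idP => [/orP[]|Rg].
- case/existsP => A /andP[_ /eqP EA].
  by have := set21 (inner v S) (outer v u (u \in S)); rewrite -/(inner_edge _ _ _) EA inner_e_hat.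
- case/existsP => v' /existsP [S' /existsP [u' /and4P[_ _ Rg /eqP]]].
  move/eqP; rewrite eq_set2 inner_outerF /= orbF eq_inner eq_outer.
  by case/and4P => /andP[/eqP -> /eqP ->] _ /eqP ->.
apply/orP; right; apply/existsP; exists v; apply/existsP; exists S; apply/existsP; exists u.
by rewrite HS Hu Rg eqxx.
Qed.

Lemma mem_choice_matching_cross v u i : e v u ->
  (cross_edge v u i \in choice_matching g) = (u \in Fnbhd v) && (i == f [set v; u]).
Proof.
move=> Hu; rewrite inE; apply/idP/idP => [/orP[]|/andP[uF /eqP ->]].
- case/existsP => A /andP[AF /eqP EA].
  have [p [q [Hpq EA']]] := two_factor_edge AF.
  have := set21 (outer v u i) (outer u v i); rewrite -/(cross_edge _ _ _) EA EA'.
  rewrite (e_hat_cross _ Hpq) !inE !eq_outer.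
  case/orP => /and3P[/eqP ? /eqP ? /eqP ->]; subst; first by rewrite Hpq AF eqxx.
  by rewrite e_sym Hpq setUC AF eqxx.
- case/existsP => v' /existsP [S' /existsP [u' /and4P[_ _ _ /eqP EB]]].
  have := set21 (inner v' S') (outer v' u' (u' \in S')).
  by rewrite -/(inner_edge _ _ _) -EB !inE !inner_outerF.
apply/orP; left; apply/existsP; exists [set v; u].
by rewrite mem_Fnbhd uF (e_hat_cross _ Hu) eqxx.
Qed.

Hypothesis g_Fnbhd : forall v, g v \in Fnbhd v.

Lemma choice_matching_pm : perfect_matching e (choice_matching g).
Proof.
apply: perfect_matching_intro; first exact: choice_matching_edge.
case=> [[v S] HS|[[v u] i] /= Hu].
  have [y [z [yx zx zy Nv NFv]]] := nbhd_split (g_Fnbhd v).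
  have [u0 [Hu0 Ru0 uniq_u0]] := gadget_match_inner yx zx zy Nv NFv HS.
  exists (inner_edge v S u0); split; [by rewrite mem_choice_matching_inner | exact: set21 |].
  move=> B BM /(hat_edge_at_inner (choice_matching_edge BM)) [u Hu EB].
  by move: BM; rewrite EB mem_choice_matching_inner // => /(uniq_u0 _ Hu) ->.
have [Hi|Hi] := boolP ((u \in Fnbhd v) && (i == f [set v; u])).
  exists (cross_edge v u i); split; [by rewrite mem_choice_matching_cross | exact: set21 |].
  move=> B BM /(hat_edge_at_outer (choice_matching_edge BM)) [//|[S [HS uS EB]]].
  move: BM; rewrite EB mem_choice_matching_inner //; case/andP: Hi => uF /eqP fi.
  by rewrite /gadget_match uF /Fmatch /free_bit uS fi; case: (f _); rewrite andbF.
have [y [z [yx zx zy Nv NFv]]] := nbhd_split (g_Fnbhd v).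
have [S0 [HS0 uS0 RS0 uniqS0]] := gadget_match_outer yx zx zy Nv NFv Hu Hi.
exists (inner_edge v S0 u); split.
- by rewrite mem_choice_matching_inner.
- by rewrite /inner_edge uS0 set22.
move=> B BM /(hat_edge_at_outer (choice_matching_edge BM)) [EB|[S [HS uS EB]]].
  by move: BM; rewrite EB mem_choice_matching_cross // (negbTE Hi).
by move: BM; rewrite EB mem_choice_matching_inner // => /(uniqS0 S HS uS) ->.
Qed.

Lemma choice_matching_mu : choice_matching g \in mu_set e F f.
Proof.
have e_hatE A i : Gedge e A -> (e_hat e i A \in choice_matching g) = (A \in F) && (i == f A).
  case/existsP => p /existsP [q /andP[Hpq /eqP ->]].
  by rewrite (e_hat_cross _ Hpq) mem_choice_matching_cross // mem_Fnbhd.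
have GF A : A \in F -> Gedge e A by case: HF => edgeF _; apply: edgeF.
rewrite inE choice_matching_pm /=; apply/and3P; split.
- apply/forallP => A; apply/implyP => GA; rewrite !e_hatE //.
  by case: (A \in F); case: (f A).
- apply/eqP/setP => A; rewrite inE.
  have [GA|GnA] := boolP (Gedge e A).
    by rewrite /= !e_hatE //; case: (A \in F); case: (f A).
  by apply/esym/negP => /GF; rewrite (negbTE GnA).
- apply/forallP => A; apply/implyP => AF.
  by rewrite /f_mu e_hatE ?GF // AF eqxx.
Qed.

End ChoiceMatching.

Lemma mu_set_gadget_choice M v : M \in mu_set e F f ->
  exists2 x0, x0 \in Fnbhd v & forall S u, even_subnbhd v S -> e v u ->
    inner_edge v S u \in M -> gadget_match v x0 S u.
Proof.
move=> HM; have [x xF] : exists x, x \in Fnbhd v by apply/set0Pn; rewrite -card_gt0 card_Fnbhd.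
have [y [z [yx zx zy Nv NFv]]] := nbhd_split xF.
have yF : y \in Fnbhd v by rewrite NFv set22.
have free_nbr u : u \in Fnbhd v -> exists2 S, even_subnbhd v S & inner_edge v S u \in M.
  move=> uF; have Hu : e v u by move: uF; rewrite inE => /andP[].
  have Hi : ~~ ((u \in Fnbhd v) && (free_bit v u == f [set v; u])).
    by rewrite /free_bit; case: (f _); rewrite andbF.
  by have [S [HS _ EM]] := mu_set_free_outer HM Hu Hi; exists S.
have [Sx HSx Ex] := free_nbr x xF; have [Sy HSy Ey] := free_nbr y yF.
have zSxy := mu_set_free_sides yx zx zy Nv NFv HM HSx HSy Ex Ey.
have [zSx|zSx] := boolP (z \in Sx); [exists y | exists x] => //.
  have Nv' : nbhd v = [set y; x; z].
    by rewrite Nv; apply/setP => w; rewrite !inE; case: (w == x); case: (w == y).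
  have NFv' : Fnbhd v = [set y; x] by rewrite NFv setUC.
  have xy : x != y by rewrite eq_sym.
  by apply: (mu_set_gadget_match xy zy zx Nv' NFv' HM HSy HSx Ey Ex); rewrite ?zSxy ?zSx.
by apply: (mu_set_gadget_match yx zx zy Nv NFv HM HSx HSy Ex Ey); rewrite ?zSxy ?zSx.
Qed.

Lemma mu_set_choice_matching M : M \in mu_set e F f ->
  exists2 g : {ffun T -> T}, (forall v, g v \in Fnbhd v) & M = choice_matching g.
Proof.
move=> HM; have [g0 g0F g0M] := fin_all_exists2 (fun v => mu_set_gadget_choice v HM).
have gF v : [ffun v => g0 v] v \in Fnbhd v by rewrite ffunE.
exists [ffun v => g0 v] => //.
apply: perfect_matching_sub_eq (mu_set_pm HM) (choice_matching_pm gF) _.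
apply/subsetP => B BM; have := perfect_matching_edge (mu_set_pm HM) BM.
case/hat_edgeP => [v S u HS Hu EB|v u i Hu EB]; rewrite EB in BM *.
  by rewrite mem_choice_matching_inner // ffunE; apply: g0M.
by rewrite mem_choice_matching_cross // -(mu_set_cross _ HM Hu).
Qed.

Lemma choice_matching_inj (g g' : T -> T) :
  (forall v, g v \in Fnbhd v) -> (forall v, g' v \in Fnbhd v) ->
  choice_matching g = choice_matching g' -> g =1 g'.
Proof.
(* For [S] inside [Fnbhd v] whose bit at [x := g v] is free, [inner v S] is matched with [x]
   in [choice_matching g], but in [choice_matching g'] only if [g' v = x]. *)
move=> gF g'F E v; set x := g v.
pose S := if free_bit v x then Fnbhd v else set0.
have Hx : e v x by move: (gF v); rewrite inE => /andP[].
have SF : S \subset Fnbhd v by rewrite /S; case: (free_bit v x); rewrite ?sub0set.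
have HS : even_subnbhd v S.
  rewrite /even_subnbhd (subset_trans SF (Fnbhd_sub v)) /S.
  by case: (free_bit v x); rewrite ?card_Fnbhd ?cards0.
have xS : (x \in S) = free_bit v x by rewrite /S; case: (free_bit v x); rewrite ?gF ?inE.
have : inner_edge v S x \in choice_matching g.
  by rewrite mem_choice_matching_inner // /gadget_match gF /Fmatch SF xS !eqxx.
by rewrite E mem_choice_matching_inner // /gadget_match gF /Fmatch SF xS eqxx andbT eqb_id => /eqP.
Qed.

Lemma card_mu_set : #|mu_set e F f| = 2 ^ #|T|.
Proof.
have -> : mu_set e F f = [set choice_matching g | g : {ffun T -> T} in setXn Fnbhd].
  apply/setP => M; apply/idP/imsetP => [HM|[g /setXnP gF ->]].
    by have [g gF ->] := mu_set_choice_matching HM; exists g => //; apply/setXnP.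
  exact: choice_matching_mu.
rewrite card_in_imset => [|g g' /setXnP gF /setXnP g'F /choice_matching_inj E]; last first.
  by apply/ffunP => v; apply: E.
rewrite cardsXn (eq_bigr (fun=> 2)) => [|v _]; last exact: card_Fnbhd.
by rewrite prod_nat_const.
Qed.

End TwoFactor.

End HatGraph.

Theorem mainTheorem3 (T : finType) (e : rel T)
  (e_sym : symmetric e) (e_irr : irreflexive e)
  (cubic : forall v : T, #|[set u | e v u]| = 3)
  (U : {set T}) (m : nat)
  (bip : forall x y : T, e x y -> (x \in U) != (y \in U))
  (cardU : #|U| = m) (cardV : #|~: U| = m)
  (F : {set {set T}}) (HF : two_factor e F) (f : {set T} -> bool) :
  #|mu_set e F f| = 2 ^ (2 * m).
Proof.
by rewrite (card_mu_set e_sym cubic HF) -(cardsC U) cardU cardV mul2n addnn.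
Qed.
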